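(* Let $k$ be a field, $J,K$ proper monomial ideals in $Q=k[x,y,z]$, and $I=JK$. Then $[I:x]\cdot[I:y]\subseteq z\,[I:(x,y)]+I$.
   Context: For ideals $I,L$ of $Q$, $I:L=\{f\in Q: fL\subseteq I\}$ and $I:f=I:(f)$. *)

From HB Require Import structures.
From mathcomp Require Import all_boot all_order all_algebra.
Set Implicit Arguments. Unset Strict Implicit. Unset Printing Implicit Defensive.
Import GRing.Theory.
Local Open Scope ring_scope.

Definition Qring (k : fieldType) := {poly {poly {poly k}}}.

Definition varx (k : fieldType) : Qring k := 'X.
Definition vary (k : fieldType) : Qring k := ('X)%:P.
Definition varz (k : fieldType) : Qring k := (('X)%:P)%:P.

Definition mono (k : fieldType) (a b c : nat) : Qring k :=
  varx k ^+ a * vary k ^+ b * varz k ^+ c.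

Definition is_monomial (k : fieldType) (m : Qring k) : Prop :=
  exists a b c, m = mono k a b c.

Definition gen (k : fieldType) (S : Qring k -> Prop) (f : Qring k) : Prop :=
  exists s : seq (Qring k * Qring k),
    (forall p, p \in s -> S p.2) /\ f = \sum_(p <- s) p.1 * p.2.

Definition principal (k : fieldType) (f : Qring k) : Qring k -> Prop :=
  gen (fun g => g = f).

Definition monomial_ideal (k : fieldType) (I : Qring k -> Prop) : Prop :=
  exists S : Qring k -> Prop,
    (forall m, S m -> is_monomial m) /\ (forall f, I f <-> gen S f).

Definition proper_Qideal (k : fieldType) (I : Qring k -> Prop) : Prop := ~ I 1.

Definition ideal_mul (k : fieldType) (J K : Qring k -> Prop) : Qring k -> Prop :=
  gen (fun p => exists j q, J j /\ K q /\ p = j * q).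

Definition colon (k : fieldType) (I L : Qring k -> Prop) : Qring k -> Prop :=
  fun f => forall g, L g -> I (f * g).

Definition colon_elt (k : fieldType) (I : Qring k -> Prop) (f : Qring k) :=
  colon I (principal f).

Definition ideal_xy (k : fieldType) : Qring k -> Prop :=
  gen (fun g => g = varx k \/ g = vary k).

Definition z_times_plus (k : fieldType) (L I : Qring k -> Prop) : Qring k -> Prop :=
  fun f => exists h i, L h /\ I i /\ f = varz k * h + i.

From HB Require Import structures.
From mathcomp Require Import all_boot all_order all_algebra.
From mathcomp Require Import zify ring.
Set Implicit Arguments. Unset Strict Implicit. Unset Printing Implicit Defensive.
Import GRing.Theory.
Local Open Scope ring_scope.

(* A polynomial f of Q = k[x,y,z] is described by its support,
   the set of exponents (a,b,c) with a nonzero coefficient of x^a y^b z^c.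
   For an up-closed exponent set E, the polynomials supported in E form an
   ideal containing exactly the monomials with exponent in E; a monomial ideal
   generated by S is the ideal of polynomials supported in the up-closure of
   the exponents of S, and the product JK of two monomial ideals is the ideal
   of polynomials supported in the sumset E_J + E_K.
   Since all ideals involved are closed under sums and multiples, it suffices
   to prove the theorem for a product of two monomials m1 m2 with x m1 and
   y m2 in I = JK.  This is a purely combinatorial statement about exponents
   (lemma [exponent_split]): either m1 m2 lies in I, or z divides m1 m2 and
   x (m1 m2 / z) and y (m1 m2 / z) lie in I.  Properness of J and K is used
   there, in the form "no generator of J or K has total degree 0". *)

Definition is_ideal (k : fieldType) (P : Qring k -> Prop) : Prop :=
  [/\ P 0, (forall u v, P u -> P v -> P (u + v)) & (forall h u, P u -> P (h * u))].

Definition exponent_set := nat -> nat -> nat -> Prop.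

Definition upclosed (E : exponent_set) : Prop :=
  forall a b c a' b' c', (a <= a')%N -> (b <= b')%N -> (c <= c')%N ->
    E a b c -> E a' b' c'.

Section Coefficients.
Variable k : fieldType.
Implicit Types (f g h : Qring k) (r : k) (a b c : nat).

Definition coef3 f a b c : k := f`_a`_b`_c.
Definition cst r : Qring k := r%:P%:P%:P.

Lemma coef3D f g a b c : coef3 (f + g) a b c = coef3 f a b c + coef3 g a b c.
Proof. by rewrite /coef3 !coefD. Qed.

Lemma coef3_0 a b c : coef3 0 a b c = 0.
Proof. by rewrite /coef3 !coef0. Qed.

Lemma cst0 : cst 0 = 0.
Proof. by rewrite /cst !polyC0. Qed.

Lemma coef3_cstM r g a b c : coef3 (cst r * g) a b c = r * coef3 g a b c.
Proof. by rewrite /coef3 /cst !coefCM. Qed.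

Lemma coef3_monoM g a b c a' b' c' :
  coef3 (mono k a b c * g) a' b' c' =
  if [&& (a <= a')%N, (b <= b')%N & (c <= c')%N]
  then coef3 g (a' - a) (b' - b) (c' - c) else 0.
Proof.
rewrite /coef3 /mono /vary /varz -!mulrA -!rmorphXn.
rewrite coefXnM; case: ltnP => ha /=; first by rewrite !coef0.
rewrite coefCM coefXnM; case: ltnP => hb /=; first by rewrite !coef0.
by rewrite coefCM coefCM coefXnM; case: ltnP.
Qed.

Lemma coef3_monoM_shift g a b c a' b' c' :
  coef3 (mono k a b c * g) (a + a') (b + b') (c + c') = coef3 g a' b' c'.
Proof. by rewrite coef3_monoM !leq_addr /= !addKn. Qed.

Lemma mono_add a b c a' b' c' :
  mono k a b c * mono k a' b' c' = mono k (a + a') (b + b') (c + c').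
Proof. rewrite /mono !exprD; ring. Qed.

Lemma mono0 : mono k 0 0 0 = 1.
Proof. by rewrite /mono !expr0 !mulr1. Qed.

Lemma varx_mono : varx k = mono k 1 0 0.
Proof. by rewrite /mono !expr0 expr1 !mulr1. Qed.

Lemma vary_mono : vary k = mono k 0 1 0.
Proof. by rewrite /mono !expr0 expr1 mulr1 mul1r. Qed.

Lemma varz_mono : varz k = mono k 0 0 1.
Proof. by rewrite /mono !expr0 expr1 !mul1r. Qed.

Lemma poly_term_ind (R : nzRingType) (T : {poly R} -> Prop) :
  T 0 -> (forall u v, T u -> T v -> T (u + v)) ->
  forall p : {poly R}, (forall i, T ((p`_i)%:P * 'X^i)) -> T p.
Proof.
move=> T0 TD p H; rewrite -[p]coefK poly_def.
by apply: big_ind => // i _; rewrite -mul_polyC.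
Qed.

Lemma cst_mono r a b c :
  cst r * mono k a b c = ((r%:P * 'X^c)%:P * 'X^b)%:P * 'X^a.
Proof. rewrite /cst /mono /varx /vary /varz !polyCM !rmorphXn; ring. Qed.

Lemma monomial_term_ind (T : Qring k -> Prop) :
  T 0 -> (forall u v, T u -> T v -> T (u + v)) ->
  forall f, (forall a b c, T (cst (coef3 f a b c) * mono k a b c)) -> T f.
Proof.
move=> T0 TD f H; apply: (poly_term_ind T0 TD) => a.
apply: (poly_term_ind (T := fun p : {poly {poly k}} => T (p%:P * 'X^a))).
- by rewrite polyC0 mul0r.
- by move=> u v Hu Hv; rewrite polyCD mulrDl; apply: TD.
move=> b; apply: (poly_term_ind (T := fun p : {poly k} => T ((p%:P * 'X^b)%:P * 'X^a))).
- by rewrite !(polyC0, mul0r).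
- by move=> u v Hu Hv; rewrite !(polyCD, mulrDl); apply: TD.
by move=> c; rewrite -cst_mono; apply: H.
Qed.

Lemma ideal_mul_terms (P : Qring k -> Prop) g h : is_ideal P ->
  (forall a b c a' b' c', coef3 g a b c != 0 -> coef3 h a' b' c' != 0 ->
     P (mono k (a + a') (b + b') (c + c'))) -> P (g * h).
Proof.
move=> [P0 PD PM] Hgh.
apply: (monomial_term_ind (T := fun g => P (g * h))); first by rewrite mul0r.
  by move=> u v Hu Hv; rewrite mulrDl; apply: PD.
move=> a b c; have [->|ga] := eqVneq (coef3 g a b c) 0; first by rewrite cst0 !mul0r.
apply: (monomial_term_ind (T := fun h => P (cst _ * mono k a b c * h))).
- by rewrite mulr0.
- by move=> u v Hu Hv; rewrite mulrDr; apply: PD.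
move=> a' b' c'; have [->|hb] := eqVneq (coef3 h a' b' c') 0.
  by rewrite cst0 !mul0r mulr0.
rewrite mulrACA mono_add; exact/PM/Hgh.
Qed.

End Coefficients.

Section Ideals.
Variable k : fieldType.
Implicit Types (f g h : Qring k) (a b c : nat).

Lemma gen_is_ideal (S : Qring k -> Prop) : is_ideal (gen S).
Proof.
split.
- by exists [::]; rewrite big_nil.
- move=> u v [s1 [H1 ->]] [s2 [H2 ->]]; exists (s1 ++ s2); rewrite big_cat.
  by split=> // p; rewrite mem_cat => /orP[/H1|/H2].
- move=> h u [s [H ->]]; exists [seq (h * p.1, p.2) | p <- s]; split.
    by move=> p /mapP[q qs ->] /=; apply: H.
  by rewrite big_map big_distrr /=; apply: eq_bigr => p _; rewrite mulrA.
Qed.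

Lemma gen_base (S : Qring k -> Prop) g : S g -> gen S g.
Proof.
by exists [:: (1, g)]; split; [move=> p; rewrite inE => /eqP -> | rewrite big_seq1 mul1r].
Qed.

Lemma gen_ind (S P : Qring k -> Prop) : is_ideal P ->
  (forall g, S g -> P g) -> forall f, gen S f -> P f.
Proof.
move=> [P0 PD PM] PS f [s [H ->]]; rewrite big_seq.
by apply: big_ind => // p /H /PS; apply: PM.
Qed.

Lemma colon_gen (I S : Qring k -> Prop) f : is_ideal I ->
  (forall g, S g -> I (f * g)) -> colon I (gen S) f.
Proof.
move=> [I0 ID IM] IS; apply: gen_ind => //; split; first by rewrite mulr0.
  by move=> u v Hu Hv; rewrite mulrDr; apply: ID.
by move=> h u Hu; rewrite mulrCA; apply: IM.
Qed.

Lemma colon_is_ideal (I L : Qring k -> Prop) : is_ideal I -> is_ideal (colon I L).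
Proof.
move=> [I0 ID IM]; split; first by move=> g _; rewrite mul0r.
  by move=> u v Hu Hv g Lg; rewrite mulrDl; apply: ID; [apply: Hu | apply: Hv].
by move=> h u Hu g Lg; rewrite -mulrA; apply/IM/Hu.
Qed.

Lemma z_times_plus_is_ideal (L I : Qring k -> Prop) :
  is_ideal L -> is_ideal I -> is_ideal (z_times_plus L I).
Proof.
move=> [L0 LD LM] [I0 ID IM]; split.
- by exists 0, 0; rewrite mulr0 addr0.
- move=> u v [h1 [i1 [H1 [I1 ->]]]] [h2 [i2 [H2 [I2 ->]]]].
  exists (h1 + h2), (i1 + i2); split; [exact: LD | split; [exact: ID | ring]].
- move=> w u [h1 [i1 [H1 [I1 ->]]]].
  exists (w * h1), (w * i1); split; [exact: LM | split; [exact: IM | ring]].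
Qed.

Lemma mono_in_target (I : Qring k -> Prop) a b c : is_ideal I ->
  I (mono k a b c) \/ [/\ (0 < c)%N, I (mono k a.+1 b c.-1) & I (mono k a b.+1 c.-1)] ->
  z_times_plus (colon I (@ideal_xy k)) I (mono k a b c).
Proof.
move=> Iid; have [I0 _ _] := Iid; have [colon0 _ _] := colon_is_ideal (@ideal_xy k) Iid.
case=> [Im | [c_gt0 Ixm Iym]]; first by exists 0, (mono k a b c); rewrite mulr0 add0r.
exists (mono k a b c.-1), 0; split; last first.
  by split=> //; rewrite varz_mono mono_add addr0 !add0n add1n prednK.
apply: colon_gen => // g [->|->].
  by rewrite varx_mono mono_add addn1 !addn0.
by rewrite vary_mono mono_add addn1 !addn0.
Qed.

End Ideals.

Definition supported (k : fieldType) (E : exponent_set) (f : Qring k) : Prop :=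
  forall a b c, coef3 f a b c != 0 -> E a b c.

Definition upper_closure (k : fieldType) (S : Qring k -> Prop) : exponent_set :=
  fun a b c => exists a0 b0 c0,
    [/\ S (mono k a0 b0 c0), (a0 <= a)%N, (b0 <= b)%N & (c0 <= c)%N].

Definition sumset (E1 E2 : exponent_set) : exponent_set :=
  fun a b c => exists a1 b1 c1 a2 b2 c2, [/\ E1 a1 b1 c1, E2 a2 b2 c2,
    (a1 + a2 <= a)%N, (b1 + b2 <= b)%N & (c1 + c2 <= c)%N].

Lemma upclosed_upper_closure (k : fieldType) (S : Qring k -> Prop) :
  upclosed (upper_closure S).
Proof.
move=> a b c a' b' c' ha hb hc [a0 [b0 [c0 [Sm h1 h2 h3]]]].
by exists a0, b0, c0; split=> //; lia.
Qed.

Lemma upclosed_sumset (E1 E2 : exponent_set) : upclosed (sumset E1 E2).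
Proof.
move=> a b c a' b' c' ha hb hc [a1 [b1 [c1 [a2 [b2 [c2 [E1m E2m h1 h2 h3]]]]]]].
by exists a1, b1, c1, a2, b2, c2; split=> //; lia.
Qed.

Section Support.
Variable k : fieldType.
Variable E : exponent_set.
Hypothesis upE : upclosed E.
Implicit Types (f g h u v : Qring k) (a b c : nat).

Lemma supported_is_ideal : is_ideal (supported (k:=k) E).
Proof.
have S0 : supported E (0 : Qring k) by move=> a b c; rewrite coef3_0 eqxx.
have SD : forall u v, supported E u -> supported E v -> supported E (u + v).
  move=> u v Hu Hv a b c; rewrite coef3D.
  by have [->|/Hu //] := eqVneq (coef3 u a b c) 0; rewrite add0r => /Hv.
split=> // h g Sg; apply: (monomial_term_ind (T := fun h => supported E (h * g))).
- by rewrite mul0r.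
- by move=> u v Hu Hv; rewrite mulrDl; apply: SD.
move=> a b c a' b' c'; rewrite -mulrA coef3_cstM coef3_monoM.
case: ifP => [/and3P[ha hb hc] | _]; last by rewrite mulr0 eqxx.
case: (eqVneq (coef3 g (a' - a) (b' - b) (c' - c)) 0) => [->|/Sg]; first by rewrite mulr0 eqxx.
by move=> Eg _; apply: upE Eg; rewrite leq_subr.
Qed.

Lemma supported_mono a b c : E a b c -> supported E (mono k a b c).
Proof.
move=> Eabc a' b' c'; rewrite -[mono k a b c]mulr1 coef3_monoM.
by case: ifP => [/and3P[ha hb hc] _ | _]; [apply: upE Eabc | rewrite eqxx].
Qed.

Lemma supported_ideal_ind (P : Qring k -> Prop) f : is_ideal P ->
  (forall a b c, E a b c -> P (mono k a b c)) -> supported E f -> P f.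
Proof.
move=> [P0 PD PM] PE Sf; apply: monomial_term_ind => // a b c.
by have [->|/Sf/PE] := eqVneq (coef3 f a b c) 0; [rewrite cst0 mul0r | apply: PM].
Qed.

End Support.

Lemma colon_mono_exponent (k : fieldType) (E : exponent_set) (I : Qring k -> Prop)
    (g : Qring k) a0 b0 c0 a b c :
  (forall f, I f -> supported E f) -> colon_elt I (mono k a0 b0 c0) g ->
  coef3 g a b c != 0 -> E (a0 + a) (b0 + b) (c0 + c).
Proof.
move=> IE Ig; rewrite -(coef3_monoM_shift g a0 b0 c0); apply: IE.
by rewrite mulrC; apply/Ig/gen_base.
Qed.

Section MonomialIdeals.
Variable k : fieldType.
Implicit Types (S : Qring k -> Prop) (f g : Qring k) (a b c : nat).

Lemma upper_closure_gen S a b c : upper_closure S a b c -> gen S (mono k a b c).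
Proof.
move=> [a0 [b0 [c0 [Sm h1 h2 h3]]]].
have -> : mono k a b c = mono k (a - a0) (b - b0) (c - c0) * mono k a0 b0 c0.
  by rewrite mono_add !subnK.
by have [_ _ GM] := gen_is_ideal S; apply/GM/gen_base.
Qed.

Lemma gen_monomials_supported S f :
  (forall m, S m -> is_monomial m) -> gen S f <-> supported (upper_closure S) f.
Proof.
have upS := upclosed_upper_closure (S := S).
move=> monoS; split; last first.
  by apply: supported_ideal_ind (gen_is_ideal S) (upper_closure_gen (S := S)).
apply: gen_ind; first exact: supported_is_ideal.
move=> g Sg; have [a [b [c Eg]]] := monoS _ Sg; rewrite Eg; apply: supported_mono => //.
by exists a, b, c; rewrite -Eg.
Qed.

Lemma proper_upper_closure S a b c :
  ~ gen S 1 -> upper_closure S a b c -> (0 < a + b + c)%N.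
Proof.
move=> notS1 HS; rewrite lt0n; apply/negP => /eqP deg0; apply: notS1; move: HS.
have [-> -> ->] : [/\ a = 0, b = 0 & c = 0]%N by split; lia.
by rewrite -mono0; apply: upper_closure_gen.
Qed.

Lemma ideal_mul_supported (J K SJ SK : Qring k -> Prop) f :
  (forall m, SJ m -> is_monomial m) -> (forall g, J g <-> gen SJ g) ->
  (forall m, SK m -> is_monomial m) -> (forall g, K g <-> gen SK g) ->
  ideal_mul J K f <-> supported (sumset (upper_closure SJ) (upper_closure SK)) f.
Proof.
move=> monoJ eJ monoK eK; set E := sumset _ _.
have upE : upclosed E := @upclosed_sumset _ _.
split.
  apply: gen_ind; first exact: supported_is_ideal.
  move=> _ [j [q [/eJ/(gen_monomials_supported _ monoJ) Jj
                  [/eK/(gen_monomials_supported _ monoK) Kq ->]]]].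
  apply: ideal_mul_terms; first exact: supported_is_ideal.
  move=> a b c a' b' c' /Jj Ea /Kq Eb; apply: supported_mono => //.
  by exists a, b, c, a', b', c'.
apply: supported_ideal_ind (gen_is_ideal _) _ => // a b c.
move=> [a1 [b1 [c1 [a2 [b2 [c2 [E1 E2 h1 h2 h3]]]]]]].
have -> : mono k a b c = mono k (a - a1 - a2) (b - b1 - b2) (c - c1 - c2) *
                         (mono k a1 b1 c1 * mono k a2 b2 c2).
  by rewrite !mono_add; congr mono; lia.
have [_ _ GM] := gen_is_ideal (fun p => exists j q, J j /\ K q /\ p = j * q).
apply/GM/gen_base; exists (mono k a1 b1 c1), (mono k a2 b2 c2).
by split; [apply/eJ/upper_closure_gen | split; [apply/eK/upper_closure_gen |]].
Qed.

End MonomialIdeals.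

(* Let (j1,k1) and (j2,k2) be pairs of nonzero exponents
   with j1 + k1 <= e + (1,0,0) and j2 + k2 <= e' + (0,1,0), and s = e + e'.
   If j2 + k2 involves x, or j1 + k1 involves y, one of these sums is <= s.
   Otherwise j1 + k1 has no y and j2 + k2 no x; if one of k1, j1 involves x
   and one of j2, k2 involves y, a mixed sum j_i + k_l is <= s; in the remaining
   cases a factor is a pure power of z, which forces s to involve z and both
   s - (0,0,1) + (1,0,0) and s - (0,0,1) + (0,1,0) to dominate a sum. *)
Lemma exponent_arith (j1x j1y j1z k1x k1y k1z j2x j2y j2z k2x k2y k2z
                      a b c a' b' c' : nat) :
  (0 < j1x + j1y + j1z)%N -> (0 < k1x + k1y + k1z)%N ->
  (0 < j2x + j2y + j2z)%N -> (0 < k2x + k2y + k2z)%N ->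
  (j1x + k1x <= a.+1)%N -> (j1y + k1y <= b)%N -> (j1z + k1z <= c)%N ->
  (j2x + k2x <= a')%N -> (j2y + k2y <= b'.+1)%N -> (j2z + k2z <= c')%N ->
  (j1x + k1x <= a + a' /\ j1y + k1y <= b + b' /\ j1z + k1z <= c + c')%N \/
  (j1x + k2x <= a + a' /\ j1y + k2y <= b + b' /\ j1z + k2z <= c + c')%N \/
  (j2x + k1x <= a + a' /\ j2y + k1y <= b + b' /\ j2z + k1z <= c + c')%N \/
  (j2x + k2x <= a + a' /\ j2y + k2y <= b + b' /\ j2z + k2z <= c + c')%N \/
  (0 < c + c' /\
   (j1x + k1x <= (a + a').+1 /\ j1y + k1y <= b + b' /\ j1z + k1z <= (c + c').-1) /\
   (j2x + k2x <= a + a' /\ j2y + k2y <= (b + b').+1 /\ j2z + k2z <= (c + c').-1))%N.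
Proof.
move=> *.
have [h|h] := leqP 1 (j2x + k2x); first by lia.
have [h'|h'] := leqP 1 (j1y + k1y); first by lia.
have [h2|h2] := leqP 1 k1x; have [h3|h3] := leqP 1 j2y;
have [h4|h4] := leqP 1 j1x; have [h5|h5] := leqP 1 k2y; lia.
Qed.

Lemma exponent_split (E1 E2 : exponent_set) a b c a' b' c' :
  (forall a b c, E1 a b c -> 0 < a + b + c)%N ->
  (forall a b c, E2 a b c -> 0 < a + b + c)%N ->
  sumset E1 E2 a.+1 b c -> sumset E1 E2 a' b'.+1 c' ->
  sumset E1 E2 (a + a') (b + b') (c + c') \/
  [/\ (0 < c + c')%N, sumset E1 E2 (a + a').+1 (b + b') (c + c').-1
    & sumset E1 E2 (a + a') (b + b').+1 (c + c').-1].
Proof.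
move=> pos1 pos2 [j1x [j1y [j1z [k1x [k1y [k1z [J1 K1 hx hy hz]]]]]]].
move=> [j2x [j2y [j2z [k2x [k2y [k2z [J2 K2 hx' hy' hz']]]]]]].
have := exponent_arith (pos1 _ _ _ J1) (pos2 _ _ _ K1) (pos1 _ _ _ J2) (pos2 _ _ _ K2)
  hx hy hz hx' hy' hz'.
case=> [[g1 [g2 g3]] | [[g1 [g2 g3]] | [[g1 [g2 g3]] | [[g1 [g2 g3]] | ]]]].
- by left; exists j1x, j1y, j1z, k1x, k1y, k1z.
- by left; exists j1x, j1y, j1z, k2x, k2y, k2z.
- by left; exists j2x, j2y, j2z, k1x, k1y, k1z.
- by left; exists j2x, j2y, j2z, k2x, k2y, k2z.
move=> [cpos [[g1 [g2 g3]] [g4 [g5 g6]]]]; right; split=> //.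
- by exists j1x, j1y, j1z, k1x, k1y, k1z.
- by exists j2x, j2y, j2z, k2x, k2y, k2z.
Qed.

Theorem mainTheorem7 (k : fieldType) (J K : Qring k -> Prop)
  (hJ : monomial_ideal J) (hK : monomial_ideal K)
  (pJ : proper_Qideal J) (pK : proper_Qideal K) :
  let I := ideal_mul J K in
  forall f : Qring k,
    ideal_mul (colon_elt I (@varx k)) (colon_elt I (@vary k)) f ->
    z_times_plus (colon I (@ideal_xy k)) I f.
Proof.
move=> I; have [SJ [monoJ eJ]] := hJ; have [SK [monoK eK]] := hK.
pose E := sumset (upper_closure SJ) (upper_closure SK).
have I_supp g : I g <-> supported E g := ideal_mul_supported g monoJ eJ monoK eK.
have I_mono a b c : E a b c -> I (mono k a b c).
  by move=> Eabc; apply/I_supp/(supported_mono (@upclosed_sumset _ _)).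
have posJ := proper_upper_closure (fun J1 => pJ ((eJ 1).2 J1)).
have posK := proper_upper_closure (fun K1 => pK ((eK 1).2 K1)).
have I_ideal : is_ideal I := gen_is_ideal _.
have T_ideal := z_times_plus_is_ideal (colon_is_ideal (@ideal_xy k) I_ideal) I_ideal.
apply: gen_ind => // _ [g [h [Ig [Ih ->]]]].
apply: ideal_mul_terms => // a b c a' b' c' ga hb.
rewrite varx_mono in Ig; rewrite vary_mono in Ih.
have I_supp' f : I f -> supported E f by move/I_supp.
have Ex : E a.+1 b c := colon_mono_exponent I_supp' Ig ga.
have Ey : E a' b'.+1 c' := colon_mono_exponent I_supp' Ih hb.
apply: mono_in_target => //.
case: (exponent_split posJ posK Ex Ey) => [Es | [cpos Ex' Ey']]; [left | right].
  exact: I_mono.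
by split=> //; apply: I_mono.
Qed.
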